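(* For every indexed forest $F$, the double forest polynomial $\mathfrak P_F(\mathbf x;\mathbf t)$ depends only on the variables $x_1,\dots,x_{\max\mathrm{Qdes}(F)}$ and $t_1,\dots,t_{(\max\mathrm{supp}(F))-1}$. In particular, if $\mathrm{supp}(F)\subseteq[n]$ then $\mathfrak P_F(\mathbf x;\mathbf t)\in\mathbb Z[t_1,\dots,t_{n-1}][x_1,\dots,x_n]$.
   Context: Convention: $\max\emptyset=0$ (so the claim for $F=\emptyset$, where $\mathfrak P_\emptyset=1$, is that it depends on no variables). Indexed forests: a binary plane tree is a rooted tree each of whose nodes is a leaf or an internal node with ordered left and right children. An indexed forest is a sequence $F=(T_1,T_2,\dots)$ of binary plane trees, all but finitely many being the one-node tree; its leaves are identified with $\mathbb N$ left to right; $\emptyset$ is the forest with no internal nodes. $\mathrm{supp}(F)$ is the set of leaves belonging to trees with at least one internal node. An internal node is terminal if both children are leaves; $\rho_F(v)$ is the leaf reached from internal node $v$ by repeatedly going to left children; $\mathrm{Qdes}(F)=\{\rho_F(v): v\text{ terminal}\}$; for $i\in\mathrm{Qdes}(F)$, $F/i$ is obtained by deleting the terminal node with $\rho_F(v)=i$ (replacing it and its two leaves by one leaf, relabeling leaves). Double forest polynomials: $\mathbf x=(x_1,x_2,\dots)$, $\mathbf t=(t_1,t_2,\dots)$. For $f\in\mathbb Z[\mathbf t][\mathbf x]$ let $R_i^-f=f(x_1,\dots,x_{i-1},t_i,x_i,\dots;\mathbf t)$, $R_i^+f=f(x_1,\dots,x_i,t_i,x_{i+1},\dots;\mathbf t)$,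 $E_if=(R_i^+f-R_i^-f)/(x_i-t_i)$. The $\mathfrak P_F(\mathbf x;\mathbf t)$ are the unique family of homogeneous polynomials (with $\deg x_i=\deg t_i=1$) such that $\mathfrak P_F(\mathbf t;\mathbf t)=\delta_{F,\emptyset}$ and $E_i\mathfrak P_F=\mathfrak P_{F/i}(\mathbf x;\widehat{\mathbf t}_i)$ if $i\in\mathrm{Qdes}(F)$, $0$ otherwise, with $\widehat{\mathbf t}_i=(t_1,\dots,t_{i-1},t_{i+1},\dots)$. *)

(* multinomials' monoid algebra {malg int[{cmonom V}]}
   gives the polynomial ring Z[x_1,x_2,...; t_1,t_2,...] in countably
   many variables. *)
From HB Require Import structures.
From mathcomp Require Import all_boot all_order all_algebra.
From mathcomp Require Import finmap.
From mathcomp.multinomials Require Import monalg.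

Set Implicit Arguments.
Unset Strict Implicit.
Unset Printing Implicit Defensive.

Import GRing.Theory.
Local Open Scope ring_scope.

(* Variable [inl k] stands for x_(k+1), [inr k] for t_(k+1).           *)
Definition var : Type := (nat + nat)%type.
Definition xtpoly : Type := {malg int[{cmonom var}]}.

Definition pvar (v : var) : xtpoly := << @ucm _ v >>.
(* paper (1-based) indexing: X i = x_i, T i = t_i for i >= 1 *)
Definition X (i : nat) : xtpoly := pvar (inl i.-1).
Definition T (i : nat) : xtpoly := pvar (inr i.-1).

Definition subst (s : var -> xtpoly) (p : xtpoly) : xtpoly :=
  mmap (fun c : int => c%:~R)
       (fun m : {cmonom var} => \prod_(v <- finsupp m) s v ^+ m v) p.

(* substitution given, in paper indexing, the image fx j of x_j and
   the image ft j of t_j (j >= 1) *)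
Definition subst2 (fx ft : nat -> xtpoly) : xtpoly -> xtpoly :=
  subst (fun v => match v with inl k => fx k.+1 | inr k => ft k.+1 end).

(* R_i^- f = f(x_1,...,x_{i-1}, t_i, x_i, x_{i+1}, ...; t) *)
Definition Rminus (i : nat) : xtpoly -> xtpoly :=
  subst2 (fun j => if (j < i)%N then X j else if j == i then T i else X j.-1) T.
(* R_i^+ f = f(x_1,...,x_i, t_i, x_{i+1}, ...; t) *)
Definition Rplus (i : nat) : xtpoly -> xtpoly :=
  subst2 (fun j => if (j <= i)%N then X j else if j == i.+1 then T i else X j.-1) T.
(* f(x; \hat t_i), \hat t_i = (t_1,...,t_{i-1},t_{i+1},...) *)
Definition that (i : nat) : xtpoly -> xtpoly :=
  subst2 X (fun j => if (j < i)%N then T j else T j.+1).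
Definition atT : xtpoly -> xtpoly := subst2 T T.

(* homogeneous for deg x_i = deg t_i = 1 *)
Definition homogeneous (p : xtpoly) : Prop :=
  exists d : nat, forall m : {cmonom var}, m \in msupp p -> mdeg m = d.

Definition vars_within (a b : nat) (p : xtpoly) : Prop :=
  forall m : {cmonom var}, m \in msupp p ->
  forall v : var, v \in finsupp m ->
    match v with inl k => (k.+1 <= a)%N | inr k => (k.+1 <= b)%N end.

Inductive btree : Type := Leaf | Node of btree & btree.

Definition is_node (t : btree) : bool := if t is Node _ _ then true else false.

Fixpoint nleaves (t : btree) : nat :=
  match t with Leaf => 1%N | Node l r => (nleaves l + nleaves r)%N end.

(* A forest (T_1, T_2, ...) is represented by the finite list of its trees
   up to the last one having an internal node (all later trees are the
   one-node tree); normality makes the representation unique. *)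
Definition normal (s : seq btree) : bool :=
  if s is [::] then true else is_node (last Leaf s).

Record forest : Type := Forest { trees : seq btree; _ : normal trees }.

Fixpoint dropLeaves (s : seq btree) : seq btree :=
  match s with Leaf :: s' => dropLeaves s' | _ => s end.

Definition strip (s : seq btree) : seq btree := rev (dropLeaves (rev s)).

Lemma normal_strip s : normal (strip s).
Proof.
rewrite /strip; elim: (rev s) => [//|t u IH] /=.
case: t => [//|l r]; by rewrite rev_cons /normal; case: (rev u) => [|a w];
  rewrite ?last_rcons //= last_rcons.
Qed.

Definition mkforest (s : seq btree) : forest := Forest (normal_strip s).

Definition is_empty_forest (F : forest) : bool := nilp (trees F).

(* Leaves are labelled 1, 2, 3, ... from left to right; [off] is the
   number of leaves to the left of the current subtree. *)

(* Qdes: rho_F(v) for the terminal nodes v *)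
Fixpoint qdesT (off : nat) (t : btree) : seq nat :=
  match t with
  | Leaf => [::]
  | Node Leaf Leaf => [:: off.+1]
  | Node l r => qdesT off l ++ qdesT (off + nleaves l) r
  end.

Fixpoint qdesS (off : nat) (s : seq btree) : seq nat :=
  match s with
  | [::] => [::]
  | t :: s' => qdesT off t ++ qdesS (off + nleaves t) s'
  end.

Definition Qdes (F : forest) : seq nat := qdesS 0 (trees F).

Fixpoint suppS (off : nat) (s : seq btree) : seq nat :=
  match s with
  | [::] => [::]
  | t :: s' => (if is_node t then iota off.+1 (nleaves t) else [::])
               ++ suppS (off + nleaves t) s'
  end.

Definition supp (F : forest) : seq nat := suppS 0 (trees F).

(* F/i : delete the terminal node v with rho_F(v) = i *)
Fixpoint contrT (i off : nat) (t : btree) : btree :=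
  match t with
  | Leaf => Leaf
  | Node Leaf Leaf => if off.+1 == i then Leaf else Node Leaf Leaf
  | Node l r => Node (contrT i off l) (contrT i (off + nleaves l) r)
  end.

Fixpoint contrS (i off : nat) (s : seq btree) : seq btree :=
  match s with
  | [::] => [::]
  | t :: s' => contrT i off t :: contrS i (off + nleaves t) s'
  end.

Definition contract (F : forest) (i : nat) : forest :=
  mkforest (contrS i 0 (trees F)).

(* E_i f = g  is expressed as  (x_i - t_i) g = R_i^+ f - R_i^- f.       *)
Definition is_double_forest_family (P : forest -> xtpoly) : Prop :=
  forall F : forest,
    homogeneous (P F) /\
    atT (P F) = (if is_empty_forest F then 1 else 0) /\
    (forall i : nat, (1 <= i)%N ->
       Rplus i (P F) - Rminus i (P F) =
       (if i \in Qdes F then (X i - T i) * that i (P (contract F i)) else 0)).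

(* If i > max Qdes F then E_i P_F = 0, i.e. R_i^+ P_F = R_i^- P_F.  A polynomial
   with this property for every i > a involves no x_i with i > a: if it involves
   only x_1, ..., x_i, then R_i^+ fixes it while R_i^- removes x_i.
   For the t-variables, let m >= max supp F and let sigma_m set t_m to 0.  By
   induction on the number of internal nodes, g = P_F - sigma_m P_F satisfies
   E_i g = 0 for every i: for i > max Qdes F because g has no x_i, and for the
   smaller i < m because sigma_m commutes with E_i up to the shift \hat t_i,
   which turns it into sigma_(m-1), while max supp (F/i) <= m - 1.  Hence g
   involves no x-variable, so g = g(t;t) = delta - sigma_m delta = 0 with
   delta = delta_{F,empty}, i.e. P_F does not involve t_m. *)

From HB Require Import structures.
From mathcomp Require Import all_boot all_order all_algebra.
From mathcomp Require Import finmap.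
From mathcomp.multinomials Require Import monalg.
From mathcomp Require Import zify.

Set Implicit Arguments.
Unset Strict Implicit.
Unset Printing Implicit Defensive.

Import GRing.Theory.

(** * Indexed forests *)

Fixpoint nnodes (t : btree) : nat :=
  match t with Leaf => 0 | Node l r => (nnodes l + nnodes r).+1 end.

Definition forest_nnodes (F : forest) : nat := sumn (map nnodes (trees F)).

Lemma nleaves_gt0 t : 0 < nleaves t.
Proof. by elim: t => //= l IHl r IHr; rewrite addn_gt0 IHl. Qed.

Lemma qdesT_Node off l r : qdesT off (Node l r) =
  if is_node l || is_node r then qdesT off l ++ qdesT (off + nleaves l) r
  else [:: off.+1].
Proof. by case: l => [|? ?]; case: r => [|? ?]. Qed.

Lemma contrT_Node i off l r : contrT i off (Node l r) =
  if is_node l || is_node r then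
    Node (contrT i off l) (contrT i (off + nleaves l) r)
  else if off.+1 == i then Leaf else Node Leaf Leaf.
Proof. by case: l => [|? ?]; case: r => [|? ?]. Qed.

Lemma mem_qdesT off t x : x \in qdesT off t -> off < x < off + nleaves t.
Proof.
elim: t off => [|l IHl r IHr] off //; rewrite qdesT_Node; case: ifP => [_|].
  have := nleaves_gt0 l; have := nleaves_gt0 r.
  by rewrite mem_cat => ? ? /orP[/IHl|/IHr] /=; lia.
by case: l r {IHl IHr} => [|? ?] [|? ?] //= _; rewrite inE => /eqP ->; lia.
Qed.

Lemma qdesT_is_node off t x : x \in qdesT off t -> is_node t.
Proof. by case: t. Qed.

Lemma contrT_id i off t : i \notin qdesT off t -> contrT i off t = t.
Proof.
elim: t off => [|l IHl r IHr] off //; rewrite qdesT_Node contrT_Node.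
case: ifP => [_|hn]; first by rewrite mem_cat negb_or => /andP[/IHl -> /IHr ->].
by rewrite inE eq_sym => /negPf ->; case: l r hn {IHl IHr} => [|? ?] [|? ?].
Qed.

Lemma contrT_size i off t : i \in qdesT off t ->
  nleaves (contrT i off t) = (nleaves t).-1 /\
  nnodes (contrT i off t) < nnodes t.
Proof.
elim: t off => [|l IHl r IHr] off //; rewrite qdesT_Node contrT_Node.
case: ifP => [_|hn]; last first.
  by case: l r hn {IHl IHr} => [|? ?] [|? ?] //= _; rewrite inE eq_sym => ->.
have := nleaves_gt0 l; have := nleaves_gt0 r.
rewrite mem_cat; case: (boolP (i \in qdesT off l)) => [hl|hl] /= ? ? hr.
  have [-> ?] := IHl _ hl.
  have hr' : i \notin qdesT (off + nleaves l) r.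
    by apply/negP => /mem_qdesT; have := mem_qdesT hl; lia.
  by rewrite (contrT_id hr'); lia.
by have [-> ?] := IHr _ hr; rewrite (contrT_id hl); lia.
Qed.

Lemma mem_qdesS off s x : x \in qdesS off s -> off < x.
Proof.
elim: s off => [|t s IH] off //=; rewrite mem_cat => /orP[/mem_qdesT|/IH].
  by case/andP.
by have := nleaves_gt0 t; lia.
Qed.

Lemma contrS_id i off s : i <= off -> contrS i off s = s.
Proof.
elim: s off => [|t s IH] off //= h; rewrite IH ?contrT_id //; last by lia.
by apply/negP => /mem_qdesT; lia.
Qed.

Lemma suppS_succ off s j : j \in suppS off s -> j.+1 \in suppS off.+1 s.
Proof.
elim: s off => [|t s IH] off //=; rewrite !mem_cat => /orP[|/IH]; last first.
  by rewrite addSn => ->; rewrite orbT.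
by case: (is_node t) => //; rewrite !mem_iota => h; apply/orP; left; lia.
Qed.

Lemma qdesS_succ_suppS off s x : x \in qdesS off s -> x.+1 \in suppS off s.
Proof.
elim: s off => [|t s IH] off //=; rewrite !mem_cat => /orP[h|/IH ->].
  by rewrite (qdesT_is_node h) mem_iota; have := mem_qdesT h; lia.
by rewrite orbT.
Qed.

Lemma suppS_contrS off s i j :
  i \in qdesS off s -> j \in suppS off (contrS i off s) ->
  (j < i) || (j.+1 \in suppS off s).
Proof.
elim: s off => [|t s IH] off //=; rewrite mem_cat.
have := nleaves_gt0 t.
case: (boolP (i \in qdesT off t)) => [ht|ht] /= ? hi.
  have [e _] := contrT_size ht; have hb := mem_qdesT ht.
  rewrite contrS_id; last by lia.
  rewrite (qdesT_is_node ht) !mem_cat e mem_iota => /orP[|/suppS_succ].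
    by case: (is_node _) => //; rewrite mem_iota; lia.
  by rewrite -addnS prednK ?nleaves_gt0 // => ->; rewrite !orbT.
rewrite contrT_id // !mem_cat => /orP[|hj].
  by have := mem_qdesS hi; case: (is_node t) => //; rewrite mem_iota; lia.
by case/orP: (IH _ hi hj) => ->; rewrite ?orbT.
Qed.

Lemma nnodes_contrS off s i : i \in qdesS off s ->
  sumn (map nnodes (contrS i off s)) < sumn (map nnodes s).
Proof.
elim: s off => [|t s IH] off //=; rewrite mem_cat.
case: (boolP (i \in qdesT off t)) => [ht|ht] /= hi.
  have [_ ?] := contrT_size ht; have hb := mem_qdesT ht.
  by rewrite contrS_id; lia.
by rewrite contrT_id //; have := IH _ hi; lia.
Qed.

Lemma stripE s : exists k, s = strip s ++ nseq k Leaf.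
Proof.
suff [k e] : exists k, rev s = nseq k Leaf ++ dropLeaves (rev s).
  by exists k; rewrite -[LHS]revK {1}e rev_cat rev_nseq.
elim: (rev s) => [|[|l r] u [k IH]]; first by exists 0.
  by exists k.+1; rewrite /= -IH.
by exists 0.
Qed.

Lemma suppS_cat off a b :
  suppS off (a ++ b) = suppS off a ++ suppS (off + sumn (map nleaves a)) b.
Proof. by elim: a off => [|t a IH] off /=; rewrite ?addn0 // IH catA addnA. Qed.

Lemma suppS_Leaves off k : suppS off (nseq k Leaf) = [::].
Proof. by elim: k off => //= k IH off; rewrite IH. Qed.

Lemma suppS_strip s : suppS 0 (strip s) = suppS 0 s.
Proof.
by have [k {2}->] := stripE s; rewrite suppS_cat suppS_Leaves cats0.
Qed.

Lemma nnodes_strip s : sumn (map nnodes (strip s)) = sumn (map nnodes s).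
Proof.
by have [k {2}->] := stripE s; rewrite map_cat sumn_cat map_nseq sumn_nseq addn0.
Qed.

Lemma Qdes_lt_max_supp F i : i \in Qdes F -> i < \max_(j <- supp F) j.
Proof. by move/qdesS_succ_suppS => h; apply: (leq_bigmax_seq _ h). Qed.

Lemma max_Qdes_le F : \max_(i <- Qdes F) i <= (\max_(j <- supp F) j).-1.
Proof.
apply/bigmax_leqP_seq => i /Qdes_lt_max_supp h _.
by rewrite -ltnS prednK // (leq_ltn_trans _ h).
Qed.

Lemma supp_contract_lt F i j : i \in Qdes F -> j \in supp (contract F i) ->
  j < \max_(k <- supp F) k.
Proof.
rewrite /supp /contract /= suppS_strip => hi /(suppS_contrS hi) /orP[hj|hj].
  exact: ltn_trans hj (Qdes_lt_max_supp hi).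
exact: leq_bigmax_seq hj _.
Qed.

Lemma forest_nnodes_contract F i : i \in Qdes F ->
  forest_nnodes (contract F i) < forest_nnodes F.
Proof. by rewrite /forest_nnodes /contract /= nnodes_strip; apply: nnodes_contrS. Qed.

(** * Substitution of variables *)

Local Open Scope ring_scope.

Implicit Types (p q : xtpoly) (s : var -> xtpoly) (i m : nat) (v : var) (Q : pred var).

Definition mon_eval (s : var -> xtpoly) (m : {cmonom var}) : xtpoly :=
  \prod_(v <- finsupp m) s v ^+ m v.

Lemma mon_evalEw s (m : {cmonom var}) (d : {fset var}) : (finsupp m `<=` d)%fset ->
  mon_eval s m = \prod_(v <- d) s v ^+ m v.
Proof.
move=> le; rewrite /mon_eval (big_fset_incl _ le) // => v _.
by rewrite -cmE_neq0 negbK => /eqP ->; rewrite expr0.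
Qed.

Lemma mon_eval_is_multiplicative s : mmorphism (mon_eval s).
Proof.
split=> [m1 m2|]; last by rewrite /mon_eval mdom1 big_seq_fset0.
rewrite /= !(@mon_evalEw s _ (finsupp m1 `|` finsupp m2)%fset)
  ?mdomD ?fsubsetUl ?fsubsetUr //.
by rewrite -big_split; apply: eq_bigr => v _; rewrite cmM exprD.
Qed.

HB.instance Definition _ s :=
  isMultiplicative.Build _ _ (mon_eval s) (mon_eval_is_multiplicative s).

Lemma mon_evalU s v : mon_eval s (ucm v) = s v.
Proof. by rewrite /mon_eval mdomU big_seq_fset1 cmUU expr1. Qed.

Lemma mon_eval_pvar (m : {cmonom var}) : mon_eval pvar m = << m >>.
Proof.
move: {2}(mdeg m) (erefl (mdeg m)) => n; elim: n m => [|n IH] m hm.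
  by rewrite (mdeg_eq0I hm) mmorph1 -mpolyC1E.
have [e|[v hv]] := fset_0Vmem (finsupp m).
  by move: hm; rewrite mdegE e big_seq_fset0.
have em : m = mmul (ucm v) (divcm m (ucm v)).
  apply/eqP/cmP => i; rewrite cmM divcmE !cmU.
  have : (0 < m v)%N by rewrite lt0n cmE_neq0.
  by case: eqP => [<-|_] /=; lia.
move: hm; rewrite em mdegM mdegU add1n => -[hm].
rewrite (mon_eval_is_multiplicative pvar).1 mon_evalU IH //.
by rewrite /pvar malgM_def fgmulUU mul1r.
Qed.

Lemma subst_is_zmod_morphism s : zmod_morphism (subst s).
Proof. exact: mmapB. Qed.

Lemma subst_is_monoid_morphism s : monoid_morphism (subst s).
Proof.
have [hM h1] := @mmap_is_multiplicative _ int xtpoly intr (mon_eval s).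
by split=> [|p q]; rewrite /subst ?h1 ?hM.
Qed.

HB.instance Definition _ s := GRing.isZmodMorphism.Build _ _ (subst s)
  (subst_is_zmod_morphism s).
HB.instance Definition _ s := GRing.isMonoidMorphism.Build _ _ (subst s)
  (subst_is_monoid_morphism s).

Lemma substE s p : subst s p = \sum_(m <- msupp p) (p@_m)%:~R * mon_eval s m.
Proof. by []. Qed.

Lemma subst_pvar s v : subst s (pvar v) = s v.
Proof. by rewrite /subst mmapU -/(mon_eval s _) mon_evalU mul1r. Qed.

Lemma subst_pvar_id p : subst pvar p = p.
Proof.
rewrite substE [RHS]monalgE; apply: eq_bigr => m _.
have -> : ((p@_m)%:~R : xtpoly) = (p@_m)%:MP.
  by rewrite -[in RHS](intz (p@_m)) (rmorph_int (@malgC _ int)).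
by rewrite mon_eval_pvar malgM_def fgmulUU mulr1 mul1m.
Qed.

Lemma eq_in_subst s1 s2 p :
  (forall m : {cmonom var}, m \in msupp p -> forall v, v \in finsupp m -> s1 v = s2 v) ->
  subst s1 p = subst s2 p.
Proof.
move=> h; rewrite !substE; apply: eq_big_seq => m hm.
by have -> : mon_eval s1 m = mon_eval s2 m by apply: eq_big_seq => v /(h m hm) ->.
Qed.

Lemma subst_comp s1 s2 p : subst s2 (subst s1 p) = subst (subst s2 \o s1) p.
Proof.
rewrite [subst s1 p]substE rmorph_sum [RHS]substE; apply: eq_bigr => m _.
rewrite rmorphM rmorph_int rmorph_prod; congr (_ * _).
by apply: eq_bigr => v _; rewrite rmorphXn.
Qed.

Definition vars_in (Q : pred var) : {pred xtpoly} :=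
  fun p => all (fun m : {cmonom var} => all Q (finsupp m)) (msupp p).

Lemma vars_inP Q p :
  reflect (forall m : {cmonom var}, m \in msupp p -> forall v, v \in finsupp m -> Q v)
          (p \in vars_in Q).
Proof.
by apply: (iffP allP) => [h m /h /allP|h m /h hm] //; apply/allP.
Qed.

Lemma vars_in_subring_closed Q : subring_closed (vars_in Q).
Proof.
split.
- apply/vars_inP => m; rewrite -mcoeff_neq0 mcoeff1.
  have [-> _ v|_] := eqVneq m mone; last by rewrite eqxx.
  by rewrite mdom1 inE.
- move=> p q /vars_inP hp /vars_inP hq; apply/vars_inP => m.
  by move/(fsubsetP (msuppB_le p q)); rewrite inE => /orP[/hp|/hq].
- move=> p q /vars_inP hp /vars_inP hq; apply/vars_inP => m.
  case/msuppM_le => [m1 [m2 [h1 h2 ->]]] v.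
  by rewrite mdomD inE => /orP[/(hp _ h1)|/(hq _ h2)].
Qed.

HB.instance Definition _ Q :=
  GRing.isSubringClosed.Build _ (vars_in Q) (vars_in_subring_closed Q).

Lemma vars_in_mono (Q1 Q2 : pred var) p :
  (forall v, Q1 v -> Q2 v) -> p \in vars_in Q1 -> p \in vars_in Q2.
Proof. by move=> h /vars_inP hp; apply/vars_inP => m /hp hm v /hm /h. Qed.

Lemma vars_in_pvar Q v : Q v -> pvar v \in vars_in Q.
Proof.
move=> hv; apply/vars_inP => m; rewrite /pvar msuppU1 => /fset1P ->.
by rewrite mdomU => w /fset1P ->.
Qed.

Lemma vars_in_subst Q s p :
  (forall m : {cmonom var}, m \in msupp p ->
     forall v, v \in finsupp m -> s v \in vars_in Q) ->
  subst s p \in vars_in Q.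
Proof.
move=> h; rewrite substE big_seq rpred_sum // => m hm.
rewrite rpredM ?rpred_int // /mon_eval big_seq rpred_prod // => v hv.
by rewrite rpredX // (h m hm).
Qed.

Definition xbelow (a : nat) : pred var :=
  fun v => if v is inl k then (k < a)%N else true.

Definition tbelow (b : nat) : pred var :=
  fun v => if v is inr k then (k < b)%N else true.

Lemma vars_within_xbelow_tbelow a b p :
  p \in vars_in (xbelow a) -> p \in vars_in (tbelow b) -> vars_within a b p.
Proof.
by move=> /vars_inP hx /vars_inP ht m hm [k|k] hv; [apply: hx hv | apply: ht hv].
Qed.

Lemma exists_xbelow p : exists a, p \in vars_in (xbelow a).
Proof.
pose xdeg v := if v is inl k then k.+1 else 0.
pose mxdeg (m : {cmonom var}) := \max_(v <- finsupp m) xdeg v.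
exists (\max_(m <- msupp p) mxdeg m); apply/vars_inP => m hm [k|//] hv /=.
apply: leq_trans (@leq_bigmax_seq _ _ xpredT xdeg _ hv isT) _.
exact: (@leq_bigmax_seq _ _ xpredT mxdeg _ hm).
Qed.

(* All substitutions used here send each variable to a variable or to 0; they
   compose through [obind], so commutation rules reduce to pointwise checks. *)
Definition ren (f : var -> option var) v : xtpoly :=
  if f v is Some w then pvar w else 0.

Lemma subst_ren_comp f g p :
  subst (ren f) (subst (ren g) p) = subst (ren (fun v => obind f (g v))) p.
Proof.
rewrite subst_comp; apply: eq_in_subst => m _ v _; rewrite /ren /=.
by case: (g v) => [w|] /=; rewrite ?subst_pvar ?rmorph0.
Qed.

Lemma eq_in_subst_ren f g p :
  (forall m : {cmonom var}, m \in msupp p -> forall v, v \in finsupp m -> f v = g v) ->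
  subst (ren f) p = subst (ren g) p.
Proof. by move=> h; apply: eq_in_subst => m hm v hv; rewrite /ren (h m hm v hv). Qed.

Lemma subst_ren_id f p :
  (forall m : {cmonom var}, m \in msupp p -> forall v, v \in finsupp m -> f v = Some v) ->
  subst (ren f) p = p.
Proof.
by move=> h; rewrite -[RHS]subst_pvar_id; apply: eq_in_subst => m hm v /(h m hm) hv;
  rewrite /ren hv.
Qed.

Lemma vars_in_subst_ren (Q Q' : pred var) f p :
  (forall v, Q v -> if f v is Some w then Q' w else true) ->
  p \in vars_in Q -> subst (ren f) p \in vars_in Q'.
Proof.
move=> hf /vars_inP hp; apply: vars_in_subst => m hm v /(hp m hm)/hf.
by rewrite /ren; case: (f v) => [w|_]; [apply: vars_in_pvar | apply: rpred0].
Qed.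

Definition Rplus_ren (i : nat) (v : var) : option var :=
  match v with
  | inl k => if (k < i)%N then Some (inl k)
             else if k == i then Some (inr i.-1) else Some (inl k.-1)
  | inr k => Some (inr k)
  end.

Definition Rminus_ren (i : nat) (v : var) : option var :=
  match v with
  | inl k => if (k.+1 < i)%N then Some (inl k)
             else if k.+1 == i then Some (inr i.-1) else Some (inl k.-1)
  | inr k => Some (inr k)
  end.

Definition that_ren (i : nat) (v : var) : option var :=
  match v with
  | inl k => Some (inl k)
  | inr k => if (k.+1 < i)%N then Some (inr k) else Some (inr k.+1)
  end.

Definition atT_ren (v : var) : option var :=
  match v with inl k | inr k => Some (inr k) end.

Definition tzero_ren (m : nat) (v : var) : option var :=
  match v with
  | inl k => Some (inl k)
  | inr k => if k.+1 == m then None else Some (inr k)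
  end.

Definition tzero (m : nat) : xtpoly -> xtpoly := subst (ren (tzero_ren m)).

(* [done] comes after [lia]: comparing two different substitutions by
   conversion is prohibitively slow. *)
Ltac renaming_cases :=
  rewrite ?/ren /=; repeat (case: ifP => /= ?);
  first [ exfalso; lia | done | lia
        | match goal with
          | |- Some (inl _) = Some (inl _) => congr (Some (inl _)); lia
          | |- Some (inr _) = Some (inr _) => congr (Some (inr _)); lia
          end ].

Lemma RplusE i p : Rplus i p = subst (ren (Rplus_ren i)) p.
Proof. by apply: eq_in_subst => m _ [] k _; renaming_cases. Qed.

Lemma RminusE i p : Rminus i p = subst (ren (Rminus_ren i)) p.
Proof. by apply: eq_in_subst => m _ [] k _; renaming_cases. Qed.

Lemma thatE i p : that i p = subst (ren (that_ren i)) p.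
Proof. by apply: eq_in_subst => m _ [] k _; renaming_cases. Qed.

Lemma atTE p : atT p = subst (ren atT_ren) p.
Proof. by apply: eq_in_subst => m _ [] k _. Qed.

Lemma Rplus_tzero i m p : (0 < i)%N -> i != m ->
  Rplus i (tzero m p) = tzero m (Rplus i p).
Proof.
move=> i0 /eqP ne; rewrite !RplusE /tzero !subst_ren_comp.
by apply: eq_in_subst_ren => _ _ [] k _; renaming_cases.
Qed.

Lemma Rminus_tzero i m p : (0 < i)%N -> i != m ->
  Rminus i (tzero m p) = tzero m (Rminus i p).
Proof.
move=> i0 /eqP ne; rewrite !RminusE /tzero !subst_ren_comp.
by apply: eq_in_subst_ren => _ _ [] k _; renaming_cases.
Qed.

Lemma tzero_that i m p : (i < m)%N -> tzero m (that i p) = that i (tzero m.-1 p).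
Proof.
move=> im; rewrite !thatE /tzero !subst_ren_comp.
by apply: eq_in_subst_ren => _ _ [] k _; renaming_cases.
Qed.

Lemma tzero_XsubT i m : (0 < i)%N -> i != m -> tzero m (X i - T i) = X i - T i.
Proof.
move=> i0 /eqP ne; rewrite /tzero /X /T raddfB /=.
rewrite [q in q - _]subst_pvar [q in _ - q]subst_pvar /ren /=.
by case: ifP => // /eqP; lia.
Qed.

Lemma atT_tzero a m p : (a < m)%N -> p \in vars_in (xbelow a) ->
  atT (tzero m p) = tzero m (atT p).
Proof.
move=> am /vars_inP hp; rewrite !atTE /tzero !subst_ren_comp.
by apply: eq_in_subst_ren => mm hm v /(hp mm hm); case: v => k /= hk; renaming_cases.
Qed.

Lemma Rplus_id i p : p \in vars_in (xbelow i) -> Rplus i p = p.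
Proof.
move=> /vars_inP hp; rewrite RplusE; apply: subst_ren_id => mm hm v /(hp mm hm).
by case: v => k /= hk; renaming_cases.
Qed.

Lemma Rminus_id i p : p \in vars_in (xbelow i.-1) -> Rminus i p = p.
Proof.
move=> /vars_inP hp; rewrite RminusE; apply: subst_ren_id => mm hm v /(hp mm hm).
by case: v => k /= hk; renaming_cases.
Qed.

Lemma atT_id p : p \in vars_in (xbelow 0) -> atT p = p.
Proof.
move=> /vars_inP hp; rewrite atTE; apply: subst_ren_id => mm hm v /(hp mm hm).
by case: v.
Qed.

Lemma Rminus_xbelow i p :
  p \in vars_in (xbelow i) -> Rminus i p \in vars_in (xbelow i.-1).
Proof. by rewrite RminusE; apply: vars_in_subst_ren => -[] k /= hk; renaming_cases. Qed.

Lemma tzero_xbelow a m p : p \in vars_in (xbelow a) -> tzero m p \in vars_in (xbelow a).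
Proof. by apply: vars_in_subst_ren => -[] k /= hk; renaming_cases. Qed.

Lemma vars_in_of_tzero_id m p : (0 < m)%N -> tzero m p = p ->
  p \in vars_in (predC1 (inr m.-1)).
Proof.
move=> m0 <-; apply: (@vars_in_subst_ren predT); last by apply/vars_inP.
by case=> k _ //=; case: ifP => // /eqP km; apply/eqP => -[]; lia.
Qed.

Lemma RplusB i p q : Rplus i (p - q) = Rplus i p - Rplus i q.
Proof. exact: raddfB. Qed.

Lemma RminusB i p q : Rminus i (p - q) = Rminus i p - Rminus i q.
Proof. exact: raddfB. Qed.

Lemma atTB p q : atT (p - q) = atT p - atT q.
Proof. exact: raddfB. Qed.

Lemma tzeroB m p q : tzero m (p - q) = tzero m p - tzero m q.
Proof. exact: raddfB. Qed.

Lemma tzeroM m p q : tzero m (p * q) = tzero m p * tzero m q.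
Proof. exact: rmorphM. Qed.

Lemma subrACA (V : zmodType) (a b c d : V) : (a - b) - (c - d) = (a - c) - (b - d).
Proof. by rewrite !opprD addrACA. Qed.

(* (x_i - t_i) E_i p *)
Definition Rdiff i p := Rplus i p - Rminus i p.

Lemma RdiffB i p q : Rdiff i (p - q) = Rdiff i p - Rdiff i q.
Proof. by rewrite /Rdiff RplusB RminusB; apply: subrACA. Qed.

Lemma Rdiff_tzero i m p : (0 < i)%N -> i != m ->
  Rdiff i (tzero m p) = tzero m (Rdiff i p).
Proof.
by move=> i0 im; rewrite /Rdiff tzeroB (Rplus_tzero p i0 im) (Rminus_tzero p i0 im).
Qed.

Lemma xbelow_of_Rplus_eq_Rminus a p :
  (forall i, (a < i)%N -> Rplus i p = Rminus i p) -> p \in vars_in (xbelow a).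
Proof.
move=> hE; have [b] := exists_xbelow p; elim: b => [|b IH] hb.
  by apply: vars_in_mono hb => -[].
have [le|lt] := leqP b.+1 a.
  by apply: vars_in_mono hb => -[k|] //= hk; apply: leq_trans le.
by apply: IH; rewrite -(Rplus_id hb) hE //; apply: Rminus_xbelow.
Qed.

Lemma atT_id_of_Rplus_eq_Rminus p :
  (forall i, (0 < i)%N -> Rplus i p = Rminus i p) -> atT p = p.
Proof. by move=> hE; apply/atT_id/xbelow_of_Rplus_eq_Rminus. Qed.

(** * Double forest polynomials *)

Section DoubleForestFamily.

Variable P : forest -> xtpoly.
Hypothesis hP : is_double_forest_family P.

Lemma double_forest_Rdiff F i : (0 < i)%N ->
  Rdiff i (P F) =
  if i \in Qdes F then (X i - T i) * that i (P (contract F i)) else 0.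
Proof. by have [_ [_ hE]] := hP F; apply: hE. Qed.

Lemma double_forest_xbelow F : P F \in vars_in (xbelow (\max_(i <- Qdes F) i)).
Proof.
apply: xbelow_of_Rplus_eq_Rminus => i hi; apply: subr0_eq.
have iQ : i \notin Qdes F.
  by apply: contraTN hi => /(@leq_bigmax_seq _ _ xpredT id) /(_ isT); rewrite -leqNgt.
by rewrite [_ - _]double_forest_Rdiff ?(negPf iQ) ?(leq_ltn_trans (leq0n _) hi).
Qed.

Lemma tzero_double_forest_step F m :
  (\max_(i <- Qdes F) i < m)%N ->
  (forall i, i \in Qdes F -> tzero m.-1 (P (contract F i)) = P (contract F i)) ->
  tzero m (P F) = P F.
Proof.
set a := \max_(i <- Qdes F) i => am IH.
have hx : P F \in vars_in (xbelow a) := double_forest_xbelow F.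
pose g := P F - tzero m (P F).
have hg : g \in vars_in (xbelow a) by rewrite rpredB ?tzero_xbelow.
have hgE i : (0 < i)%N -> Rplus i g = Rminus i g.
  move=> i0; have [ai|ia] := ltnP a i.
    rewrite Rplus_id ?Rminus_id //.
      by apply: vars_in_mono hg => -[k|] //= hk; lia.
    by apply: vars_in_mono hg => -[k|] //= hk; lia.
  have im : i != m by apply/eqP; lia.
  apply: subr0_eq; rewrite [_ - _](RdiffB i) (Rdiff_tzero _ i0 im).
  rewrite (double_forest_Rdiff F i0); case: ifP => [hi|_]; last first.
    by rewrite /tzero rmorph0 subrr.
  have im' : (i < m)%N by have := Qdes_lt_max_supp hi; lia.
  by rewrite tzeroM (tzero_XsubT i0 im) (tzero_that _ im') IH ?subrr.
have : atT g = 0.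
  rewrite atTB (atT_tzero am hx); have [_ [-> _]] := hP F.
  by case: ifP => _; rewrite /tzero ?rmorph1 ?rmorph0 subrr.
by rewrite atT_id_of_Rplus_eq_Rminus // => /subr0_eq/esym.
Qed.

Lemma tzero_double_forest F m : (\max_(j <- supp F) j <= m)%N -> (0 < m)%N ->
  tzero m (P F) = P F.
Proof.
move: {2}(forest_nnodes F) (erefl (forest_nnodes F)) => n.
elim/ltn_ind: n F m => n IH F m eFn hm m0.
apply: tzero_double_forest_step => [|i hi].
  by have := max_Qdes_le F; lia.
have := Qdes_lt_max_supp hi; have := mem_qdesS hi => i0 iS.
apply: (IH _ _ _ _ erefl); first by rewrite -eFn forest_nnodes_contract.
  by apply/bigmax_leqP_seq => j /(supp_contract_lt hi) hj _; lia.
lia.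
Qed.

Lemma double_forest_tbelow F :
  P F \in vars_in (tbelow (\max_(j <- supp F) j).-1).
Proof.
apply/vars_inP => mm hm [//|k] hv /=; rewrite ltnNge; apply/negP => hk.
have /(vars_in_of_tzero_id (ltn0Sn k))/vars_inP/(_ mm hm _ hv) : tzero k.+1 (P F) = P F.
  by apply: tzero_double_forest => //; lia.
by rewrite /= eqxx.
Qed.

End DoubleForestFamily.

Theorem corollary4p8 (P : forest -> xtpoly) (hP : is_double_forest_family P)
  (F : forest) :
  vars_within (\max_(i <- Qdes F) i) (\max_(i <- supp F) i).-1 (P F) /\
  (forall n : nat, {subset supp F <= [pred j | (1 <= j <= n)%N]} ->
     vars_within n n.-1 (P F)).
Proof.
have hx := double_forest_xbelow hP F; have ht := double_forest_tbelow hP F.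
split=> [|n hsub]; first exact: vars_within_xbelow_tbelow.
have hS : (\max_(j <- supp F) j <= n)%N.
  by apply/bigmax_leqP_seq => j /hsub /andP[].
have hQ := max_Qdes_le F.
apply: vars_within_xbelow_tbelow.
  by apply: vars_in_mono hx => -[k|] //= hk; lia.
by apply: vars_in_mono ht => -[|k] //= hk; lia.
Qed.
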